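(* Let $\mathcal{C}$ be a category, let $\mathcal{D}$ be a full pro-reflective subcategory of $\mathcal{C}$, and let $J$ be a directed partially ordered set. For every pair $P,Q\in Ob\,\mathcal{D}$ the following are equivalent: (i) $P\cong Q$ in $\mathcal{D}$; (ii) $P\cong Q$ in the shape category $Sh_{(\mathcal{C},\mathcal{D})}$; (iii) $P\cong Q$ in the $J$-shape category $Sh^J_{(\mathcal{C},\mathcal{D})}$.
   Context: An inverse system $\boldsymbol{X}=(X_\lambda,p_{\lambda\lambda'},\Lambda)$ in a category: $\Lambda$ directed preordered, morphisms $p_{\lambda\lambda'}:X_{\lambda'}\to X_\lambda$ ($\lambda\le\lambda'$), $p_{\lambda\lambda}=1$, $p_{\lambda\lambda'}p_{\lambda'\lambda''}=p_{\lambda\lambda''}$. A $J$-morphism $(f,f^j_\mu):\boldsymbol{X}\to\boldsymbol{Y}=(Y_\mu,q_{\mu\mu'},M)$: $f:M\to\Lambda$ and morphisms $f^j_\mu:X_{f(\mu)}\to Y_\mu$ ($j\in J$) such that for all $\mu\le\mu'$ there exist $\lambda\ge f(\mu),f(\mu')$, $j_0$ with $f^{j'}_\mu p_{f(\mu)\lambda}=q_{\mu\mu'}f^{j'}_{\mu'}p_{f(\mu')\lambda}$ for $j'\ge j_0$; composition $(fg,g^j_\nu f^j_{g(\nu)})$; $(f,f^j_\mu)\sim(f',f'^j_\mu)$ iff for each $\mu$ there are $\lambda\ge f(\mu),f'(\mu)$, $j_0$ with $f^{j'}_\mu p_{f(\mu)\lambda}=f'^{j'}_\mu p_{f'(\mu)\lambda}$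 for $j'\ge j_0$; $pro^J$-$\mathcal{D}$ is the quotient category; $J=\{1\}$ gives $pro$-$\mathcal{D}$, and $\underline{I}:pro$-$\mathcal{D}\to pro^J$-$\mathcal{D}$ sends $[(f,f_\mu)]$ to $[(f,f^j_\mu=f_\mu)]$. A $\mathcal{D}$-expansion of $X\in Ob\,\mathcal{C}$ is a family $\boldsymbol{p}=(p_\lambda:X\to X_\lambda)$ into an inverse system in $\mathcal{D}$ with $p_{\lambda\lambda'}p_{\lambda'}=p_\lambda$ such that (E1) each $h:X\to P$, $P\in Ob\,\mathcal{D}$, factors as $gp_\lambda$, and (E2) $gp_\lambda=g'p_\lambda$ implies $gp_{\lambda\lambda'}=g'p_{\lambda\lambda'}$ for some $\lambda'\ge\lambda$; $\mathcal{D}$ is pro-reflective if every object of $\mathcal{C}$ has one. $Sh^J_{(\mathcal{C},\mathcal{D})}$: objects of $\mathcal{C}$; with chosen $\mathcal{D}$-expansions $\boldsymbol{p}:X\to\boldsymbol{X}$, $\boldsymbol{q}:Y\to\boldsymbol{Y}$, morphisms $X\to Y$ are the morphisms $\boldsymbol{X}\to\boldsymbol{Y}$ of $pro^J$-$\mathcal{D}$, identified across choices of expansions via $\underline{I}$ of the canonical $pro$-$\mathcal{D}$ isomorphisms between expansions; composition of representatives. $Sh_{(\mathcal{C},\mathcal{D})}$ is the case $J=\{1\}$ (abstract shape category). (For $P\in Ob\,\mathcal{D}$ the rudimentary system $(P)$ with identity is a $\mathcal{D}$-expansion.) *)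

Set Implicit Arguments.
Unset Strict Implicit.

Record Category := {
  ob : Type;
  hom : ob -> ob -> Type;
  idm : forall a, hom a a;
  comp : forall a b c, hom b c -> hom a b -> hom a c;
  comp_id_l : forall a b (f : hom a b), comp (idm b) f = f;
  comp_id_r : forall a b (f : hom a b), comp f (idm a) = f;
  comp_assoc : forall a b c d (h : hom c d) (g : hom b c) (f : hom a b),
      comp h (comp g f) = comp (comp h g) f
}.

Arguments idm {c0} a.
Arguments comp {c0 a b c} _ _.

Definition iso_in (C : Category) (a b : ob C) : Prop :=
  exists (f : hom a b) (g : hom b a), comp g f = idm a /\ comp f g = idm b.

(* A full subcategory D of C is given by the predicate of its objects
   (inD); its morphisms are all C-morphisms between them. *)
Definition iso_in_full_sub (C : Category) (inD : ob C -> Prop)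
  (P Q : ob C) : Prop :=
  exists (f : hom P Q) (g : hom Q P), comp g f = idm P /\ comp f g = idm Q.

Record DirPoset := {
  dp : Type;
  dle : dp -> dp -> Prop;
  dle_refl : forall a, dle a a;
  dle_trans : forall a b c, dle a b -> dle b c -> dle a c;
  dle_antisym : forall a b, dle a b -> dle b a -> a = b;
  dle_directed : forall a b, exists c, dle a c /\ dle b c;
  dp_inhabited : inhabited dp
}.

Definition unitPoset : DirPoset.
Proof.
  refine (@Build_DirPoset unit (fun _ _ => True) _ _ _ _ _).
  - intros; exact I.
  - intros; exact I.
  - intros [] [] _ _; reflexivity.
  - intros a b; exists tt; split; exact I.
  - exact (inhabits tt).
Defined.

Record InvSys (C : Category) (inD : ob C -> Prop) := {
  idx : Type;
  ile : idx -> idx -> Prop;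
  ile_refl : forall l, ile l l;
  ile_trans : forall l1 l2 l3, ile l1 l2 -> ile l2 l3 -> ile l1 l3;
  ile_directed : forall l1 l2, exists l3, ile l1 l3 /\ ile l2 l3;
  idx_inhabited : inhabited idx;
  sobj : idx -> ob C;
  sobj_inD : forall l, inD (sobj l);
  bond : forall l l', ile l l' -> hom (sobj l') (sobj l);
  bond_id : forall l (h : ile l l), bond h = idm (sobj l);
  bond_comp : forall l l' l'' (h1 : ile l l') (h2 : ile l' l'') (h3 : ile l l''),
      comp (bond h1) (bond h2) = bond h3
}.

Arguments idx {C inD} _.
Arguments ile {C inD} _ _ _.
Arguments sobj {C inD} _ _.
Arguments bond {C inD} _ {l l'} _.

Section ProJ.
Variables (C : Category) (inD : ob C -> Prop) (J : DirPoset).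

(* Raw data (f, f^j_mu) of a J-morphism X -> Y. *)
Record JData (X Y : InvSys inD) := {
  jmap : idx Y -> idx X;
  jcomp : forall (j : dp J) (mu : idx Y), hom (sobj X (jmap mu)) (sobj Y mu)
}.

Definition is_JMor (X Y : InvSys inD) (f : JData X Y) : Prop :=
  forall (mu mu' : idx Y) (h : ile Y mu mu'),
    exists (lam : idx X) (h1 : ile X (jmap f mu) lam) (h2 : ile X (jmap f mu') lam)
           (j0 : dp J),
      forall j', dle j0 j' ->
        comp (jcomp f j' mu) (bond X h1)
        = comp (bond Y h) (comp (jcomp f j' mu') (bond X h2)).

Definition jcompose (X Y Z : InvSys inD) (f : JData X Y) (g : JData Y Z)
  : JData X Z :=
  {| jmap := fun nu => jmap f (jmap g nu);
     jcomp := fun j nu => comp (jcomp g j nu) (jcomp f j (jmap g nu)) |}.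

Definition jidentity (X : InvSys inD) : JData X X :=
  {| jmap := fun l => l; jcomp := fun j l => idm (sobj X l) |}.

Definition jequiv (X Y : InvSys inD) (f f' : JData X Y) : Prop :=
  forall mu : idx Y,
    exists (lam : idx X) (h1 : ile X (jmap f mu) lam) (h2 : ile X (jmap f' mu) lam)
           (j0 : dp J),
      forall j', dle j0 j' ->
        comp (jcomp f j' mu) (bond X h1) = comp (jcomp f' j' mu) (bond X h2).

(* X and Y are isomorphic in pro^J-D (the quotient category). *)
Definition iso_proJ (X Y : InvSys inD) : Prop :=
  exists (f : JData X Y) (g : JData Y X),
    is_JMor f /\ is_JMor g /\
    jequiv (jcompose f g) (jidentity X) /\
    jequiv (jcompose g f) (jidentity Y).
End ProJ.

Record Expansion (C : Category) (inD : ob C -> Prop) (X : ob C) := {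
  esys : InvSys inD;
  eproj : forall l : idx esys, hom X (sobj esys l);
  eproj_compat : forall l l' (h : ile esys l l'),
      comp (bond esys h) (eproj l') = eproj l;
  eE1 : forall (P : ob C), inD P -> forall h : hom X P,
      exists (l : idx esys) (g : hom (sobj esys l) P), h = comp g (eproj l);
  eE2 : forall (P : ob C), inD P -> forall (l : idx esys) (g g' : hom (sobj esys l) P),
      comp g (eproj l) = comp g' (eproj l) ->
      exists (l' : idx esys) (hl : ile esys l l'),
        comp g (bond esys hl) = comp g' (bond esys hl)
}.

Arguments esys {C inD X} _.

Definition pro_reflective (C : Category) (inD : ob C -> Prop) : Prop :=
  forall X : ob C, inhabited (Expansion inD X).

(* ---------- (J-)shape categories ----------
   Given a choice E of D-expansions (which exists by pro-reflectivity),
   the morphisms X -> Y of Sh^J are the morphisms E X -> E Y of pro^J-D,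
   with composition of representatives.  Hence P, Q are isomorphic in
   Sh^J iff the chosen expansions are isomorphic in pro^J-D. *)
Definition iso_ShJ (C : Category) (inD : ob C -> Prop) (J : DirPoset)
  (E : forall X : ob C, Expansion inD X) (P Q : ob C) : Prop :=
  iso_proJ J (esys (E P)) (esys (E Q)).

(* The abstract shape category Sh is the case J = {1}. *)
Definition iso_Sh (C : Category) (inD : ob C -> Prop)
  (E : forall X : ob C, Expansion inD X) (P Q : ob C) : Prop :=
  iso_ShJ unitPoset E P Q.

(* Since Q is in D, the identity of Q factors as s p_m0 through its expansion,
   and then (E2) shows that for large j every J-morphism f of expansions
   P -> Q is induced by the morphism s f^j_m0 p_(f m0) : P -> Q.  Since P is
   in D, some projection p_l0 of P is a split monomorphism, so the morphisms
   induced by a J-isomorphism and by its inverse are mutually inverse for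
   large j.  Conversely, by (E1) a morphism P -> Q induces a J-morphism that
   does not depend on j, and (E2) yields the required relations. *)

From Stdlib Require Import ClassicalEpsilon.

Set Implicit Arguments.
Unset Strict Implicit.

Definition eventually (J : DirPoset) (p : dp J -> Prop) : Prop :=
  exists j0, forall j, dle j0 j -> p j.

Lemma eventually_and (J : DirPoset) (p q : dp J -> Prop) :
  eventually p -> eventually q -> eventually (fun j => p j /\ q j).
Proof.
  intros [jp Hp] [jq Hq].
  destruct (dle_directed jp jq) as [j0 [Hjp Hjq]].
  exists j0; intros j Hj.
  split; [apply Hp; exact (dle_trans Hjp Hj) | apply Hq; exact (dle_trans Hjq Hj)].
Qed.

Lemma eventually_exists (J : DirPoset) (p : dp J -> Prop) :
  eventually p -> exists j, p j.
Proof. intros [j0 H]; exists j0; apply H, dle_refl. Qed.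

Section ExpansionMorphisms.
Variables (C : Category) (inD : ob C -> Prop) (J : DirPoset).

Lemma eE2_pair (X : ob C) (e : Expansion inD X) (Z : ob C) (hZ : inD Z)
  (a b : idx (esys e)) (g : hom (sobj (esys e) a) Z) (g' : hom (sobj (esys e) b) Z) :
  comp g (eproj a) = comp g' (eproj b) ->
  exists c (ha : ile (esys e) a c) (hb : ile (esys e) b c),
    comp g (bond _ ha) = comp g' (bond _ hb).
Proof.
  intro H.
  destruct (ile_directed a b) as [d [had hbd]].
  assert (Hd : comp (comp g (bond _ had)) (eproj d)
             = comp (comp g' (bond _ hbd)) (eproj d)).
  { rewrite <- !comp_assoc, !eproj_compat. exact H. }
  destruct (eE2 hZ Hd) as [c [hdc Hc]].
  exists c, (ile_trans had hdc), (ile_trans hbd hdc).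
  rewrite <- (bond_comp had hdc), <- (bond_comp hbd hdc), !comp_assoc.
  exact Hc.
Qed.

Lemma eproj_split_mono (X : ob C) (e : Expansion inD X) :
  inD X -> exists l : idx (esys e),
    forall Z (x y : hom Z X), comp (eproj l) x = comp (eproj l) y -> x = y.
Proof.
  intro hX.
  destruct (eE1 e hX (idm X)) as [l [r Hr]].
  exists l; intros Z x y Hxy.
  rewrite <- (comp_id_l x), <- (comp_id_l y), Hr, <- !comp_assoc, Hxy.
  reflexivity.
Qed.

Definition const_jdata (X Y : InvSys inD) (m : idx Y -> idx X)
  (c : forall mu, hom (sobj X (m mu)) (sobj Y mu)) : JData J X Y :=
  {| jmap := m; jcomp := fun _ mu => c mu |}.

Arguments const_jdata {X Y} m c.

Section ConstJData.
Variables (X : ob C) (e : Expansion inD X).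

Lemma const_jdata_JMor (W : ob C) (eW : Expansion inD W) (w : hom X W)
  (m : idx (esys eW) -> idx (esys e))
  (c : forall mu, hom (sobj (esys e) (m mu)) (sobj (esys eW) mu)) :
  (forall mu, comp (c mu) (eproj (m mu)) = comp (eproj mu) w) ->
  is_JMor (const_jdata m c).
Proof.
  intros Hc mu mu' h.
  assert (Hmu : comp (c mu) (eproj (m mu))
              = comp (comp (bond _ h) (c mu')) (eproj (m mu'))).
  { rewrite <- comp_assoc, !Hc, comp_assoc, eproj_compat; reflexivity. }
  destruct (eE2_pair (sobj_inD mu) Hmu) as [l [h1 [h2 Hl]]].
  destruct (dp_inhabited J) as [j0].
  exists l, h1, h2, j0; intros j' _.
  rewrite comp_assoc; exact Hl.
Qed.

Lemma const_jdata_jequiv (Y : InvSys inD) (m m' : idx Y -> idx (esys e))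
  (c : forall mu, hom (sobj (esys e) (m mu)) (sobj Y mu))
  (c' : forall mu, hom (sobj (esys e) (m' mu)) (sobj Y mu)) :
  (forall mu, comp (c mu) (eproj (m mu)) = comp (c' mu) (eproj (m' mu))) ->
  jequiv (const_jdata m c) (const_jdata m' c').
Proof.
  intros Hc mu.
  destruct (eE2_pair (sobj_inD mu) (Hc mu)) as [l [h1 [h2 Hl]]].
  destruct (dp_inhabited J) as [j0].
  exists l, h1, h2, j0; intros j' _; exact Hl.
Qed.
End ConstJData.

Lemma exists_factorization (P Q : ob C) (eP : Expansion inD P) (eQ : Expansion inD Q)
  (u : hom P Q) :
  exists (m : idx (esys eQ) -> idx (esys eP))
         (c : forall mu, hom (sobj (esys eP) (m mu)) (sobj (esys eQ) mu)),
    forall mu, comp (c mu) (eproj (m mu)) = comp (eproj mu) u.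
Proof.
  assert (Hfac : forall mu : idx (esys eQ), {l : idx (esys eP) &
             {g : hom (sobj _ l) (sobj _ mu) | comp g (eproj l) = comp (eproj mu) u}}).
  { intro mu.
    destruct (constructive_indefinite_description _
                (eE1 eP (sobj_inD mu) (comp (eproj mu) u))) as [l Hl].
    destruct (constructive_indefinite_description _ Hl) as [g Hg].
    exists l, g; symmetry; exact Hg. }
  exists (fun mu => projT1 (Hfac mu)), (fun mu => proj1_sig (projT2 (Hfac mu))).
  intro mu; exact (proj2_sig (projT2 (Hfac mu))).
Qed.

Lemma iso_proJ_of_iso (P Q : ob C) (eP : Expansion inD P) (eQ : Expansion inD Q) :
  iso_in_full_sub inD P Q -> iso_proJ J (esys eP) (esys eQ).
Proof.
  intros [u [v [Hvu Huv]]].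
  destruct (exists_factorization eP eQ u) as [m [c Hc]].
  destruct (exists_factorization eQ eP v) as [m' [c' Hc']].
  exists (const_jdata m c), (const_jdata m' c').
  split; [exact (const_jdata_JMor Hc)|].
  split; [exact (const_jdata_JMor Hc')|].
  (* Composites and identities of J-morphisms not depending on j are again
     of the form [const_jdata], up to conversion. *)
  split.
  - apply (@const_jdata_jequiv P eP (esys eP) (fun l => m (m' l))
             (fun l => l) (fun l => comp (c' l) (c (m' l))) (fun l => idm _)).
    intro l.
    rewrite <- comp_assoc, Hc, comp_assoc, Hc', <- comp_assoc, Hvu, comp_id_r, comp_id_l.
    reflexivity.
  - apply (@const_jdata_jequiv Q eQ (esys eQ) (fun l => m' (m l))
             (fun l => l) (fun l => comp (c l) (c' (m l))) (fun l => idm _)).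
    intro l.
    rewrite <- comp_assoc, Hc', comp_assoc, Hc, <- comp_assoc, Huv, comp_id_r, comp_id_l.
    reflexivity.
Qed.

Section Trace.
Variables (X : ob C) (e : Expansion inD X).

Definition jtrace (Y : InvSys inD) (f : JData J (esys e) Y) (j : dp J) (mu : idx Y)
  : hom X (sobj Y mu) :=
  comp (jcomp f j mu) (eproj (jmap f mu)).

Lemma jtrace_bond (Y : InvSys inD) (f : JData J (esys e) Y) :
  is_JMor f -> forall mu mu' (h : ile Y mu mu'),
  eventually (fun j => jtrace f j mu = comp (bond Y h) (jtrace f j mu')).
Proof.
  intros Hf mu mu' h.
  destruct (Hf mu mu' h) as [l [h1 [h2 [j0 H]]]].
  exists j0; intros j hj; unfold jtrace.
  rewrite <- (eproj_compat h1), <- (eproj_compat h2), !comp_assoc, (H j hj), !comp_assoc.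
  reflexivity.
Qed.

Lemma jtrace_jequiv (Y : InvSys inD) (f f' : JData J (esys e) Y) :
  jequiv f f' -> forall mu, eventually (fun j => jtrace f j mu = jtrace f' j mu).
Proof.
  intros Hff' mu.
  destruct (Hff' mu) as [l [h1 [h2 [j0 H]]]].
  exists j0; intros j hj; unfold jtrace.
  rewrite <- (eproj_compat h1), <- (eproj_compat h2), !comp_assoc, (H j hj).
  reflexivity.
Qed.

Lemma jtrace_jcompose (Y Z : InvSys inD) (f : JData J (esys e) Y) (g : JData J Y Z) j nu :
  jtrace (jcompose f g) j nu = comp (jcomp g j nu) (jtrace f j (jmap g nu)).
Proof. unfold jtrace; simpl; rewrite comp_assoc; reflexivity. Qed.

Lemma jtrace_jidentity j l : jtrace (jidentity J (esys e)) j l = eproj l.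
Proof. exact (comp_id_l _). Qed.

Lemma jtrace_eventually_factors (Q : ob C) (hQ : inD Q) (eQ : Expansion inD Q)
  (f : JData J (esys e) (esys eQ)) :
  is_JMor f -> exists u : dp J -> hom X Q,
    forall nu, eventually (fun j => jtrace f j nu = comp (eproj nu) (u j)).
Proof.
  intro Hf.
  destruct (eE1 eQ hQ (idm Q)) as [m0 [s Hs]].
  exists (fun j => comp s (jtrace f j m0)); intro nu.
  assert (Hnu : comp (comp (eproj nu) s) (eproj m0) = comp (idm _) (eproj nu)).
  { rewrite <- comp_assoc, <- Hs, comp_id_r, comp_id_l; reflexivity. }
  destruct (eE2_pair (sobj_inD nu) Hnu) as [c [ha [hb Hc]]].
  rewrite comp_id_l in Hc.
  destruct (eventually_and (jtrace_bond Hf ha) (jtrace_bond Hf hb)) as [j0 Hj0].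
  exists j0; intros j hj.
  destruct (Hj0 j hj) as [Hm0 Hnu'].
  rewrite Hnu', <- Hc, Hm0, !comp_assoc; reflexivity.
Qed.
End Trace.

Lemma jtrace_eventually_inverse (P Q : ob C) (hP : inD P)
  (eP : Expansion inD P) (eQ : Expansion inD Q)
  (f : JData J (esys eP) (esys eQ)) (g : JData J (esys eQ) (esys eP))
  (u : dp J -> hom P Q) (v : dp J -> hom Q P) :
  (forall nu, eventually (fun j => jtrace f j nu = comp (eproj nu) (u j))) ->
  (forall l, eventually (fun j => jtrace g j l = comp (eproj l) (v j))) ->
  jequiv (jcompose f g) (jidentity J (esys eP)) ->
  eventually (fun j => comp (v j) (u j) = idm P).
Proof.
  intros Hu Hv Hfg.
  destruct (eproj_split_mono eP hP) as [l0 Hl0].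
  destruct (eventually_and (Hu (jmap g l0))
              (eventually_and (Hv l0) (jtrace_jequiv Hfg l0))) as [j0 Hj0].
  exists j0; intros j hj.
  destruct (Hj0 j hj) as [Hfu [Hgv Hgf]].
  apply Hl0.
  rewrite jtrace_jcompose, jtrace_jidentity in Hgf.
  rewrite comp_id_r, comp_assoc, <- Hgv; unfold jtrace at 1.
  rewrite <- comp_assoc, <- Hfu; exact Hgf.
Qed.

Lemma iso_of_iso_proJ (P Q : ob C) (hP : inD P) (hQ : inD Q)
  (eP : Expansion inD P) (eQ : Expansion inD Q) :
  iso_proJ J (esys eP) (esys eQ) -> iso_in_full_sub inD P Q.
Proof.
  intros [f [g [Hf [Hg [Hfg Hgf]]]]].
  destruct (jtrace_eventually_factors hQ Hf) as [u Hu].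
  destruct (jtrace_eventually_factors hP Hg) as [v Hv].
  destruct (eventually_exists (eventually_and
              (jtrace_eventually_inverse hP Hu Hv Hfg)
              (jtrace_eventually_inverse hQ Hv Hu Hgf))) as [j [Hvu Huv]].
  exists (u j), (v j); split; assumption.
Qed.
End ExpansionMorphisms.

Theorem theorem5 (C : Category) (inD : ob C -> Prop)
  (E : forall X : ob C, Expansion inD X) (J : DirPoset)
  (P Q : ob C) (hP : inD P) (hQ : inD Q) :
  (iso_in_full_sub inD P Q <-> iso_Sh E P Q) /\
  (iso_Sh E P Q <-> iso_ShJ J E P Q).
Proof.
  assert (Hiso : forall K : DirPoset, iso_in_full_sub inD P Q <-> iso_ShJ K E P Q).
  { intro K; split.
    - apply iso_proJ_of_iso.
    - apply iso_of_iso_proJ; assumption. }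
  unfold iso_Sh.
  pose proof (Hiso unitPoset); pose proof (Hiso J); tauto.
Qed.
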